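(* Let $k$ be a field, $Q$ a finite quiver with vertex set $Q_0$ and arrow set $Q_1$, $kQ$ its path algebra, and $X$ a $kQ$-bimodule which is finite dimensional over $k$. Then $$\dim_k H^1(kQ,X)=\dim_k(X^{kQ})-\dim_k(X^{kQ_0})+\sum_{x,y\in Q_0}|yQ_1x|\,\dim_k(yXx),$$ where $yQ_1x$ is the set of arrows from $x$ to $y$.
   Context: $H^1(kQ,X)$ is the first Hochschild cohomology of $kQ$ with coefficients in $X$ (derivations $kQ\to X$ modulo inner derivations). The path algebra $kQ$ has basis the paths of $Q$ (including the vertices as length-zero paths), multiplication given by concatenation when possible and $0$ otherwise; vertices are orthogonal idempotents summing to $1$. $kQ_0\subseteq kQ$ is the subalgebra spanned by the vertices. For a subalgebra $A$, $X^A=\{x\in X\mid ax=xa\ \forall a\in A\}$. For vertices $x,y$, $yXx$ denotes the subspace $y\cdot X\cdot x$. *)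

From HB Require Import structures.
From mathcomp Require Import all_boot all_order all_algebra.
Set Implicit Arguments. Unset Strict Implicit. Unset Printing Implicit Defensive.
Import GRing.Theory.
Local Open Scope ring_scope.

(* A path of Q is a starting vertex together with the list of arrows traversed *)
(* in order (the empty list gives the trivial path e_x at vertex x).           *)
Section Quiver.
Variables (nV nA : nat) (src tgt : 'I_nA -> 'I_nV).

Fixpoint path_ok (x : 'I_nV) (s : seq 'I_nA) : bool :=
  if s is a :: s' then (src a == x) && path_ok (tgt a) s' else true.

Fixpoint path_end (x : 'I_nV) (s : seq 'I_nA) : 'I_nV :=
  if s is a :: s' then path_end (tgt a) s' else x.

(* the basis of kQ: paths of Q (including trivial paths) *)
Definition qpath := {p : 'I_nV * seq 'I_nA | path_ok p.1 p.2}.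

Definition qsrc (p : qpath) : 'I_nV := (val p).1.
Definition qtgt (p : qpath) : 'I_nV := path_end (val p).1 (val p).2.

Definition vpath (x : 'I_nV) : qpath := exist _ (x, [::]) isT.

(* Product of basis paths in kQ, with the convention that an arrow a : x -> y  *)
(* satisfies e_y a e_x = a: the product p * q ("p after q") is the            *)
(* concatenation when qsrc p = qtgt q, and 0 (encoded as None) otherwise.     *)
Definition qmul (p q : qpath) : option qpath :=
  if qsrc p == qtgt q then @insub _ (fun u : 'I_nV * seq 'I_nA => path_ok u.1 u.2) qpath (qsrc q, (val q).2 ++ (val p).2) else None.

Variables (K : fieldType) (X : vectType K).

(* The kQ-bimodule structure on the finite-dimensional k-space X, given on the *)
(* basis of paths: L p = (v |-> p v), R p = (v |-> v p), extended linearly.    *)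
Definition prod_act (F : qpath -> 'End(X)) (o : option qpath) : 'End(X) :=
  if o is Some r then F r else 0.

Definition is_bimod (L R : qpath -> 'End(X)) : Prop :=
  [/\ \sum_(x : 'I_nV) L (vpath x) = \1%VF,
      \sum_(x : 'I_nV) R (vpath x) = \1%VF,
      (forall p q, (L p \o L q)%VF = prod_act L (qmul p q)),
      (forall p q, (R q \o R p)%VF = prod_act R (qmul p q)) &
      (forall p q, (L p \o R q)%VF = (R q \o L p)%VF)].

Section Bimod.
Variables (L R : qpath -> 'End(X)).

Definition prod_val (D : qpath -> X) (o : option qpath) : X :=
  if o is Some r then D r else 0.

(* k-derivations kQ -> X, given by their values on the basis of paths:        *)
(* d(p q) = p d(q) + d(p) q.                                                  *)
Definition is_der (D : qpath -> X) : Prop :=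
  forall p q, prod_val D (qmul p q) = L p (D q) + R q (D p).

Definition innerD (x : X) (p : qpath) : X := L p x - R p x.

(* dim_k H^1(kQ, X) = d : Der(kQ,X)/Inn(kQ,X) has a basis of d classes *)
Definition H1_dim (d : nat) : Prop :=
  exists D : 'I_d -> qpath -> X,
    [/\ (forall i, is_der (D i)),
        (forall E, is_der E -> exists (c : 'I_d -> K) (x : X),
             forall p, E p = \sum_(i < d) c i *: D i p + innerD x p) &
        (forall (c : 'I_d -> K) (x : X),
             (forall p, \sum_(i < d) c i *: D i p = innerD x p) ->
             forall i, c i = 0)].

Definition inv_kQ (v : X) : Prop := forall p, L p v = R p v.
Definition inv_kQ0 (v : X) : Prop :=
  forall x : 'I_nV, L (vpath x) v = R (vpath x) v.

End Bimod.
End Quiver.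

Definition has_dim (K : fieldType) (X : vectType K) (P : X -> Prop) (d : nat) :=
  exists U : {vspace X}, (forall v, v \in U <-> P v) /\ \dim U = d.

From HB Require Import structures.
From mathcomp Require Import all_boot all_order all_algebra.
Set Implicit Arguments. Unset Strict Implicit. Unset Printing Implicit Defensive.
Import GRing.Theory.
Local Open Scope ring_scope.

(* A derivation D of kQ is determined by its values on vertices and arrows.
   Subtracting the inner derivation of w = sum_y e_y D(e_y) makes it vanish on
   the vertices, and a derivation vanishing on the vertices may take, on each
   arrow a : x -> y, an arbitrary value in e_y X e_x.  So these derivations form
   a space W of dimension sum_a dim(e_{tgt a} X e_{src a}), and the inner ones
   among them are those of the z in X^{kQ_0}, i.e. the image of
   delta : z |-> (a z - z a)_a on X^{kQ_0}, whose kernel there is X^{kQ}.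
   Hence dim H^1 = dim W - (dim X^{kQ_0} - dim X^{kQ}). *)

Section Paths.
Variables (nV nA : nat) (src tgt : 'I_nA -> 'I_nV).

Local Notation qp := (qpath src tgt).
Local Notation e := (vpath src tgt).

Lemma arrow_path_ok (a : 'I_nA) : path_ok src tgt (src a) [:: a].
Proof. by rewrite /= eqxx. Qed.

Definition arrow_path a : qp := exist _ (src a, [:: a]) (arrow_path_ok a).

Lemma path_ok_cat x s1 s2 : path_ok src tgt x s1 ->
  path_ok src tgt (path_end tgt x s1) s2 -> path_ok src tgt x (s1 ++ s2).
Proof. by elim: s1 x => [//|a s1 IH] x /= /andP[-> h1] h2; apply: IH. Qed.

Lemma qmul_none (p q : qp) : qsrc p != qtgt q -> qmul p q = None.
Proof. by rewrite /qmul => /negPf ->. Qed.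

Lemma qmul_some (p q : qp) : qsrc p = qtgt q ->
  exists2 r, qmul p q = Some r & val r = (qsrc q, (val q).2 ++ (val p).2).
Proof.
move=> E; rewrite /qmul E eqxx; case: insubP => [r _ Hr|]; first by exists r.
case: q E => [[x s] h] /= E; case: p E => [[y t] h'] /= E.
by rewrite /qsrc /= in E *; rewrite path_ok_cat //; rewrite /qtgt /= in E; rewrite -E.
Qed.

Lemma qmul_vpathl (p : qp) : qmul (e (qtgt p)) p = Some p.
Proof.
have [r -> Hr] := qmul_some (p := e (qtgt p)) (q := p) erefl.
by congr Some; apply: val_inj; rewrite Hr cats0 /qsrc; case: (val p).
Qed.

Lemma qmul_vpathr (p : qp) : qmul p (e (qsrc p)) = Some p.
Proof.
have [r -> Hr] := qmul_some (p := p) (q := e (qsrc p)) erefl.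
by congr Some; apply: val_inj; rewrite Hr /qsrc /=; case: (val p).
Qed.

Lemma qmul_vpath y x : qmul (e y) (e x) = if y == x then Some (e x) else None.
Proof.
by case: eqP => [->|/eqP ne]; [apply: (qmul_vpathl (e x)) | apply: qmul_none].
Qed.

Lemma qmul_arrow_path a s (h : path_ok src tgt (tgt a) s)
    (h' : path_ok src tgt (src a) (a :: s)) :
  qmul (exist _ (tgt a, s) h) (arrow_path a) = Some (exist _ (src a, a :: s) h').
Proof.
have [r -> Hr] := qmul_some (p := exist _ (tgt a, s) h) (q := arrow_path a) erefl.
by congr Some; apply: val_inj; rewrite Hr.
Qed.

Lemma qpath_ind (P : qp -> Prop) :
  (forall x, P (e x)) ->
  (forall a s (h : path_ok src tgt (tgt a) s) (h' : path_ok src tgt (src a) (a :: s)),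
      P (exist _ (tgt a, s) h) -> P (exist _ (src a, a :: s) h')) ->
  forall p, P p.
Proof.
move=> Pe PS; suff Ps s x (h : path_ok src tgt x s) : P (exist _ (x, s) h).
  by case=> [[x s] h]; apply: Ps.
elim: s x h => [|a s IH] x h; first by have -> : exist _ (x, [::]) h = e x by apply: val_inj.
have /andP[/eqP Ex h2] := h; destruct Ex.
exact: PS (IH _ h2).
Qed.

Lemma sum_arrows (F : 'I_nV -> 'I_nV -> nat) :
  (\sum_a F (src a) (tgt a) =
   \sum_(x : 'I_nV) \sum_(y : 'I_nV)
     #|[set a : 'I_nA | (src a == x) && (tgt a == y)]| * F x y)%N.
Proof.
rewrite (partition_big (fun a => (src a, tgt a)) xpredT) //= pair_big /=.
apply: eq_bigr => [[x y]] _ /=; rewrite -sum_nat_const.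
apply: eq_big => a; first by rewrite inE xpair_eqE.
by rewrite xpair_eqE => /andP[/eqP -> /eqP ->].
Qed.

End Paths.

Section Bimodule.
Variables (K : fieldType) (X : vectType K) (nV nA : nat) (src tgt : 'I_nA -> 'I_nV).
Variables (L R : qpath src tgt -> 'End(X)).
Hypothesis hX : is_bimod L R.

Local Notation qp := (qpath src tgt).
Local Notation e := (vpath src tgt).
Local Notation arrow := (arrow_path src tgt).
Local Notation Le x := (L (e x)).
Local Notation Re x := (R (e x)).
Local Notation La a := (L (arrow a)).
Local Notation Ra a := (R (arrow a)).
Local Notation der := (is_der L R).
Local Notation inner := (innerD L R).

Lemma L_qmul p q v : L p (L q v) = prod_act L (qmul p q) v.
Proof. by case: hX => _ _ <- _ _; rewrite comp_lfunE. Qed.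

Lemma R_qmul p q v : R q (R p v) = prod_act R (qmul p q) v.
Proof. by case: hX => _ _ _ <- _; rewrite comp_lfunE. Qed.

Lemma LR_comm p q v : L p (R q v) = R q (L p v).
Proof. by case: hX => _ _ _ _ H; rewrite -comp_lfunE H comp_lfunE. Qed.

Lemma sum_Le v : \sum_y Le y v = v.
Proof. by case: hX => H _ _ _ _; rewrite -sum_lfunE H id_lfunE. Qed.

Lemma Le_L (p : qp) v : Le (qtgt p) (L p v) = L p v.
Proof. by rewrite L_qmul qmul_vpathl. Qed.

Lemma L_Le (p : qp) v : L p (Le (qsrc p) v) = L p v.
Proof. by rewrite L_qmul qmul_vpathr. Qed.

Lemma R_Re (p : qp) v : R p (Re (qtgt p) v) = R p v.
Proof. by rewrite R_qmul qmul_vpathl. Qed.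

Lemma Re_R (p : qp) v : Re (qsrc p) (R p v) = R p v.
Proof. by rewrite R_qmul qmul_vpathr. Qed.

Lemma Le_Le y x v : Le y (Le x v) = if y == x then Le x v else 0.
Proof. by rewrite L_qmul qmul_vpath; case: eqP => // _; rewrite lfunE. Qed.

Lemma Le_idem x v : Le x (Le x v) = Le x v.
Proof. by rewrite Le_Le eqxx. Qed.

Lemma Re_idem x v : Re x (Re x v) = Re x v.
Proof. by rewrite R_qmul qmul_vpath eqxx. Qed.

Fixpoint Lword (s : seq 'I_nA) : 'End(X) :=
  if s is a :: s' then (Lword s' \o La a)%VF else \1%VF.

Fixpoint Rword (s : seq 'I_nA) : 'End(X) :=
  if s is a :: s' then (Ra a \o Rword s')%VF else \1%VF.

Lemma Lword_cat s1 s2 v : Lword (s1 ++ s2) v = Lword s2 (Lword s1 v).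
Proof. by elim: s1 v => [|a s1 IH] v /=; rewrite ?id_lfunE // !comp_lfunE IH. Qed.

Lemma R_Lword q s v : R q (Lword s v) = Lword s (R q v).
Proof. by elim: s v => [|a s IH] v /=; rewrite ?id_lfunE // !comp_lfunE IH LR_comm. Qed.

Lemma L_Lword (p : qp) v : L p v = Lword (val p).2 (Le (qsrc p) v).
Proof.
elim/qpath_ind: p v => [x v|a s h h' IH v] /=; first by rewrite id_lfunE.
have := L_qmul (exist _ (tgt a, s) h) (arrow a) v; rewrite (qmul_arrow_path h h') => <-.
by rewrite IH /= comp_lfunE (Le_L (arrow a)) (L_Le (arrow a)).
Qed.

Lemma R_Rword (p : qp) v : R p v = Re (qsrc p) (Rword (val p).2 v).
Proof.
elim/qpath_ind: p v => [x v|a s h h' IH v] /=; first by rewrite id_lfunE.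
have := R_qmul (exist _ (tgt a, s) h) (arrow a) v; rewrite (qmul_arrow_path h h') => <-.
by rewrite IH /= comp_lfunE (R_Re (arrow a)) (Re_R (arrow a)).
Qed.

Lemma Re_Rword (q : qp) v :
  Re (qsrc q) (Rword (val q).2 (Re (qtgt q) v)) = Rword (val q).2 (Re (qtgt q) v).
Proof.
elim/qpath_ind: q v => [x v|a s h h' IH v] /=; first by rewrite id_lfunE Re_idem.
by rewrite comp_lfunE (Re_R (arrow a)).
Qed.

(* The path [a :: s] is the product s * a in kQ: this unfolds
   D(s * a) = D(s) a + s D(a) along the path. *)
Fixpoint der_word (m : 'I_nA -> X) (s : seq 'I_nA) : X :=
  if s is a :: s' then Ra a (der_word m s') + Lword s' (m a) else 0.

Definition der_ext m (p : qp) := der_word m (val p).2.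

Lemma der_word_cat m s1 s2 :
  der_word m (s1 ++ s2) = Rword s1 (der_word m s2) + Lword s2 (der_word m s1).
Proof.
elim: s1 => [|a s1 IH] /=; first by rewrite id_lfunE linear0 addr0.
by rewrite IH Lword_cat comp_lfunE !linearD /= R_Lword addrA.
Qed.

Definition in_corner x y v := Le y v = v /\ Re x v = v.

Section Extension.
Variable m : 'I_nA -> X.
Hypothesis m_corner : forall a, in_corner (src a) (tgt a) (m a).

Lemma der_ext_corner (p : qp) : in_corner (qsrc p) (qtgt p) (der_ext m p).
Proof.
rewrite /in_corner /der_ext.
elim/qpath_ind: p => [x|a s h h' [IHl IHr]] /=; first by rewrite !linear0.
have [mal mar] := m_corner a.
have -> : Lword s (m a) = L (exist _ (tgt a, s) h) (m a) by rewrite L_Lword /= mal.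
split; rewrite linearD /=; first by rewrite LR_comm IHl (Le_L (exist _ (tgt a, s) h)).
by rewrite (Re_R (arrow a)) -LR_comm mar.
Qed.

Lemma der_ext_der : der (der_ext m).
Proof.
move=> p q; have [ql _] := der_ext_corner q; have [_ pr] := der_ext_corner p.
case: (eqVneq (qsrc p) (qtgt q)) => [E|ne].
  have [r -> Hr] := qmul_some E.
  rewrite /= {1}/der_ext Hr /= der_word_cat addrC; congr (_ + _).
    by rewrite L_Lword E ql.
  have pr' : Re (qtgt q) (der_ext m p) = der_ext m p by rewrite -E.
  by rewrite [R q _]R_Rword -pr' Re_Rword pr'.
rewrite qmul_none //= -ql -pr L_qmul R_qmul !qmul_none //=.
by rewrite !zero_lfunE addr0.
Qed.

End Extension.

Lemma der_ext_arrow m a : der_ext m (arrow a) = m a.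
Proof. by rewrite /der_ext /= linear0 add0r id_lfunE. Qed.

Lemma innerD_der x : der (inner x).
Proof.
move=> p q; rewrite /innerD !linearB /= L_qmul R_qmul LR_comm.
by case: (qmul p q) => [r|] /=; rewrite ?zero_lfunE addrA subrK // subrr.
Qed.

Lemma innerD_add x y p : inner (x + y) p = inner x p + inner y p.
Proof. by rewrite /innerD !linearD /= addrACA. Qed.

Lemma der_sub D1 D2 : der D1 -> der D2 -> der (fun p => D1 p - D2 p).
Proof.
move=> H1 H2 p q; rewrite !linearB /= addrACA -opprD.
have := H1 p q; have := H2 p q.
by case: (qmul p q) => [r|] /= <- <-; rewrite ?subr0.
Qed.

Lemma der_lincomb d (F : 'I_d -> qp -> X) (c : 'I_d -> K) x :
  (forall i, der (F i)) -> der (fun p => \sum_(i < d) c i *: F i p + inner x p).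
Proof.
move=> HF p q; have HI := innerD_der x p q.
have HS : prod_val (fun p => \sum_(i < d) c i *: F i p) (qmul p q) =
   L p (\sum_(i < d) c i *: F i q) + R q (\sum_(i < d) c i *: F i p).
  rewrite !linear_sum -big_split /=.
  have HFi i : prod_val (F i) (qmul p q) = L p (F i q) + R q (F i p) by apply: HF.
  case: (qmul p q) HFi => [r|] /= HFi.
    by apply: eq_bigr => i _; rewrite !linearZ -scalerDr HFi.
  by rewrite big1 // => i _; rewrite !linearZ -scalerDr -HFi scaler0.
rewrite linearD [R q _]linearD /= addrACA -HS -HI.
by case: (qmul p q) => [r|] /=; rewrite ?addr0.
Qed.

Lemma der_eq D1 D2 : der D1 -> der D2 ->
  (forall x, D1 (e x) = D2 (e x)) -> (forall a, D1 (arrow a) = D2 (arrow a)) ->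
  forall p, D1 p = D2 p.
Proof.
move=> H1 H2 He Ha; elim/qpath_ind => // a s h h' IH.
have := H1 (exist _ (tgt a, s) h) (arrow a); have := H2 (exist _ (tgt a, s) h) (arrow a).
by rewrite (qmul_arrow_path h h') /= => -> ->; rewrite IH Ha.
Qed.

Lemma der_corner D : der D -> (forall x, D (e x) = 0) ->
  forall p, in_corner (qsrc p) (qtgt p) (D p).
Proof.
move=> HD D0 p; split.
  by have := HD (e (qtgt p)) p; rewrite qmul_vpathl /= D0 linear0 addr0 => <-.
by have := HD p (e (qsrc p)); rewrite qmul_vpathr /= D0 linear0 add0r => <-.
Qed.

Definition vertex_part (D : qp -> X) := \sum_y Le y (D (e y)).

(* kQ_0 is separable: the restriction of a derivation to the vertices is inner. *)
Lemma innerD_vertex_part D : der D -> forall x, inner (vertex_part D) (e x) = D (e x).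
Proof.
move=> HD x; rewrite /innerD /vertex_part !linear_sum /=.
have -> : \sum_y Le x (Le y (D (e y))) = Le x (D (e x)).
  rewrite (bigD1 x) //= big1 ?addr0 => [|y ne]; first by rewrite Le_idem.
  by rewrite Le_Le eq_sym (negPf ne).
have Re_Le y : Re x (Le y (D (e y))) =
    (if y == x then Le x (D (e x)) else 0) - Le y (D (e x)).
  have := congr1 (Le y) (HD (e y) (e x)); rewrite linearD /= Le_idem LR_comm => H.
  apply/eqP; rewrite eq_sym subr_eq addrC -H qmul_vpath.
  by case: ifP => [/eqP->|_] /=; rewrite ?Le_idem ?linear0.
rewrite sumrN (eq_bigr _ (fun y _ => Re_Le y)) sumrB sum_Le.
by rewrite -big_mkcond /= (big_pred1 x) => [|y]; rewrite 1?eq_sym // opprB addrC subrK.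
Qed.

Lemma der_sub_vertex_part D : der D ->
  der (fun p => D p - inner (vertex_part D) p) /\
  forall x, D (e x) - inner (vertex_part D) (e x) = 0.
Proof.
move=> HD; split; first exact: der_sub HD (innerD_der _).
by move=> x; rewrite innerD_vertex_part // subrr.
Qed.

Local Notation V := {ffun 'I_nA -> X}.

Definition arrow_inj_fun (a : 'I_nA) (v : X) : V := [ffun b => if b == a then v else 0].

Fact arrow_inj_fun_is_linear a : linear (arrow_inj_fun a).
Proof.
move=> k u v; apply/ffunP => b; rewrite !ffunE.
by case: eqP => _; rewrite ?scaler0 ?addr0.
Qed.

HB.instance Definition _ a :=
  GRing.isLinear.Build K X V _ (arrow_inj_fun a) (arrow_inj_fun_is_linear a).

Definition arrow_inj a : 'Hom(X, V) := linfun (arrow_inj_fun a).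

Lemma arrow_injE a v b : arrow_inj a v b = if b == a then v else 0.
Proof. by rewrite lfunE ffunE. Qed.

Definition delta_fun (v : X) : V := [ffun a => La a v - Ra a v].

Fact delta_fun_is_linear : linear delta_fun.
Proof.
move=> k u v; apply/ffunP => b; rewrite !ffunE !linearP /=.
by rewrite scalerBr scalerN addrACA.
Qed.

HB.instance Definition _ :=
  GRing.isLinear.Build K X V _ delta_fun delta_fun_is_linear.

Definition delta : 'Hom(X, V) := linfun delta_fun.

Lemma deltaE v a : delta v a = inner v (arrow a).
Proof. by rewrite lfunE ffunE. Qed.

Definition corner a := limg (Le (tgt a) \o Re (src a))%VF.

Lemma memv_corner a v : v \in corner a <-> in_corner (src a) (tgt a) v.
Proof.
split.
  by case/memv_imgP => u _ ->; rewrite /in_corner comp_lfunE Le_idem -LR_comm Re_idem.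
case=> H1 H2; rewrite -{1}H1 -{1}H2 -comp_lfunE.
exact: memv_img (memvf v).
Qed.

Definition corners := (\sum_(a : 'I_nA) (arrow_inj a @: corner a))%VS.

Lemma arrow_inj_sum (f : V) : f = \sum_a arrow_inj a (f a).
Proof.
apply/ffunP => b; rewrite sum_ffunE (bigD1 b) //= big1 ?addr0 ?arrow_injE ?eqxx //.
by move=> a ne; rewrite arrow_injE eq_sym (negPf ne).
Qed.

Lemma memv_corners f : f \in corners <-> forall a, f a \in corner a.
Proof.
split=> [|H]; last first.
  by rewrite [f]arrow_inj_sum; apply: memv_sumr => a _; apply: memv_img.
move/memv_sumP => [g Hg ->] b; rewrite sum_ffunE (bigD1 b) //= big1 ?addr0.
  by have /memv_imgP [u Hu ->] := Hg b isT; rewrite arrow_injE eqxx.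
move=> a ne; have /memv_imgP [u Hu ->] := Hg a isT.
by rewrite arrow_injE eq_sym (negPf ne).
Qed.

Lemma dim_corners : \dim corners = (\sum_a \dim (corner a))%N.
Proof.
have dx : directv corners.
  apply/directv_sum_independent => us Hus Hsum a _.
  have /memv_imgP [u Hu Eu] := Hus a isT.
  have := congr1 (fun f : V => f a) Hsum; rewrite sum_ffunE ffunE (bigD1 a) //= big1.
    by rewrite addr0 Eu arrow_injE eqxx => ->; rewrite linear0.
  move=> b ne; have /memv_imgP [u' _ ->] := Hus b isT.
  by rewrite arrow_injE eq_sym (negPf ne).
rewrite (directvP dx) /=; apply: eq_bigr => a _; apply: limg_dim_eq.
have /eqP -> : lker (arrow_inj a) == 0%VS.
  by apply/lker0P => u v /(congr1 (fun f : V => f a)); rewrite !arrow_injE eqxx.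
by rewrite capv0.
Qed.

Definition invQ0 := (\bigcap_(x : 'I_nV) lker (Le x - Re x)%VF)%VS.

Lemma memv_invQ0 v : v \in invQ0 <-> inv_kQ0 L R v.
Proof.
rewrite memvE; split=> [/subv_bigcapP H x | H].
  by have := H x isT; rewrite -memvE memv_ker add_lfunE opp_lfunE subr_eq0 => /eqP.
apply/subv_bigcapP => x _.
by rewrite -memvE memv_ker add_lfunE opp_lfunE subr_eq0 H.
Qed.

Lemma innerD_vpath z x : z \in invQ0 -> inner z (e x) = 0.
Proof. by move/memv_invQ0 => Hz; rewrite /innerD Hz subrr. Qed.

Definition invQ := (invQ0 :&: lker delta)%VS.

Lemma memv_invQ v : v \in invQ <-> inv_kQ L R v.
Proof.
split=> [|H]; last first.
  apply/memv_capP; split; first by apply/memv_invQ0 => x; apply: H.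
  by rewrite memv_ker; apply/eqP/ffunP => a; rewrite deltaE ffunE /innerD H subrr.
case/memv_capP => /memv_invQ0 Hz; rewrite memv_ker => /eqP Hk.
have Ha a : La a v = Ra a v.
  by apply/eqP; rewrite -subr_eq0 -[_ - _]deltaE Hk ffunE.
elim/qpath_ind => // a s h h' IH.
have := L_qmul (exist _ (tgt a, s) h) (arrow a) v.
have := R_qmul (exist _ (tgt a, s) h) (arrow a) v.
by rewrite (qmul_arrow_path h h') /= => <- <-; rewrite Ha LR_comm IH.
Qed.

Definition inner_corners := (delta @: invQ0)%VS.

Definition outer_corners := (corners :\: inner_corners)%VS.

Lemma inner_corners_sub : (inner_corners <= corners)%VS.
Proof.
apply/subvP => f /memv_imgP [z /memv_invQ0 Hz ->]; apply/memv_corners => a.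
rewrite deltaE; apply/memv_corner; split; rewrite linearB /=.
  by rewrite (Le_L (arrow a)) LR_comm (Hz (tgt a)) (R_Re (arrow a)).
by rewrite (Re_R (arrow a)) -LR_comm -(Hz (src a)) (L_Le (arrow a)).
Qed.

Lemma dim_outer_corners :
  (\dim outer_corners + \dim invQ0 = \dim invQ + \sum_a \dim (corner a))%N.
Proof.
rewrite -dim_corners -(dimv_cap_compl corners inner_corners).
rewrite (capv_idPr inner_corners_sub) -(limg_ker_dim delta invQ0).
by rewrite addnCA; congr (_ + _); rewrite addnC.
Qed.

Local Notation w i := (vbasis outer_corners)`_i.

Definition outer_der (i : 'I_(\dim outer_corners)) := der_ext (fun a => w i a).

Lemma outer_basis_mem (i : 'I_(\dim outer_corners)) : w i \in outer_corners.
Proof. by apply: vbasis_mem; apply: mem_nth; rewrite size_tuple. Qed.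

Lemma outer_der_der i : der (outer_der i).
Proof.
apply: der_ext_der => a; apply/memv_corner.
by move/memv_corners: (subvP (diffvSl _ _) _ (outer_basis_mem i)).
Qed.

Lemma outer_der_vpath c x : \sum_i c i *: outer_der i (e x) = 0.
Proof. by rewrite big1 // => i _; rewrite /outer_der /der_ext /= scaler0. Qed.

Lemma outer_der_arrow c a :
  \sum_i c i *: outer_der i (arrow a) = (\sum_i c i *: w i) a.
Proof.
by rewrite sum_ffunE; apply: eq_bigr => i _; rewrite ffunE /outer_der der_ext_arrow.
Qed.

Lemma outer_der_span D : der D ->
  exists (c : 'I_(\dim outer_corners) -> K) (x : X),
    forall p, D p = \sum_i c i *: outer_der i p + inner x p.
Proof.
move=> HD; have [HD' D'0] := der_sub_vertex_part HD.
set D' := fun p => D p - _ in HD' D'0.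
pose m : V := [ffun a => D' (arrow a)].
have : m \in (outer_corners + corners :&: inner_corners)%VS.
  rewrite addv_diff_cap; apply/memv_corners => a; rewrite ffunE; apply/memv_corner.
  exact: der_corner HD' D'0 (arrow a).
case/memv_addP => u Hu [_ /memv_capP [_ /memv_imgP [z Hz ->]] Em].
exists (coord (vbasis outer_corners) ^~ u), (vertex_part D + z).
apply: der_eq => //; first by apply: der_lincomb => i; apply: outer_der_der.
  move=> x; rewrite outer_der_vpath add0r innerD_add (innerD_vpath _ Hz) addr0.
  by rewrite innerD_vertex_part.
move=> a; rewrite outer_der_arrow -(coord_vbasis Hu) innerD_add.
have := congr1 (fun f : V => f a) Em; rewrite /= !ffunE deltaE => Ea.
by rewrite addrCA -Ea addrC subrK.
Qed.

Lemma outer_der_free (c : 'I_(\dim outer_corners) -> K) x :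
  (forall p, \sum_i c i *: outer_der i p = inner x p) -> forall i, c i = 0.
Proof.
move=> H; have Hx : x \in invQ0.
  apply/memv_invQ0 => y; apply/eqP; rewrite -subr_eq0.
  by rewrite -[_ - _]/(inner x (e y)) -H outer_der_vpath.
have Hs : \sum_i c i *: w i = delta x.
  by apply/ffunP => a; rewrite deltaE -H outer_der_arrow.
have : \sum_i c i *: w i = 0.
  apply/eqP; rewrite -memv0 -(capv_diff corners inner_corners) memv_cap.
  apply/andP; split; last by rewrite Hs memv_img.
  by apply: memv_suml => i _; rewrite memvZ ?outer_basis_mem.
exact/freeP/basis_free/vbasisP.
Qed.

Lemma H1_dim_outer : H1_dim L R (\dim outer_corners).
Proof.
by exists outer_der; split; [apply: outer_der_der | apply: outer_der_span | apply: outer_der_free].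
Qed.

End Bimodule.

Theorem corollary4p6 (K : fieldType) (X : vectType K) (nV nA : nat)
  (src tgt : 'I_nA -> 'I_nV) (L R : qpath src tgt -> 'End(X))
  (hX : is_bimod L R) :
  exists dH dC dC0 : nat,
    [/\ H1_dim L R dH, has_dim (inv_kQ L R) dC, has_dim (inv_kQ0 L R) dC0 &
        (dH%:Z = dC%:Z - dC0%:Z +
          (\sum_(x : 'I_nV) \sum_(y : 'I_nV)
              #|[set a : 'I_nA | (src a == x) && (tgt a == y)]| *
              \dim (limg (L (vpath src tgt y) \o R (vpath src tgt x))%VF))%N%:Z)%R].
Proof.
exists (\dim (outer_corners L R)), (\dim (invQ L R)), (\dim (invQ0 L R)); split.
- exact: H1_dim_outer.
- by exists (invQ L R); split=> // v; apply: memv_invQ.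
- by exists (invQ0 L R); split=> // v; apply: memv_invQ0.
- rewrite -(sum_arrows src tgt
              (fun x y => \dim (limg (L (vpath src tgt y) \o R (vpath src tgt x))%VF))).
  have /(congr1 Posz) := dim_outer_corners hX; rewrite /corner !PoszD => H.
  by rewrite addrAC -H addrK.
Qed.
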